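(* Let $m\ge2$ and let $\mathcal{C}\in\mathbb{S}_{m,n}$ be a symmetric Cauchy tensor with generating vector $c=(c_1,\dots,c_n)^T$. The following are equivalent: (i) $\mathcal{C}$ is completely positive; (ii) $\mathcal{C}$ is strictly copositive; (iii) $c>0$ (all $c_i>0$); (iv) the function $f_{\mathcal{C}}(x)=\mathcal{C}x^m$ is strictly monotonically increasing on $\mathbb{R}^n_+$, i.e. $f_{\mathcal{C}}(x)>f_{\mathcal{C}}(y)$ whenever $x,y\in\mathbb{R}^n_+$, $x\ge y$ entrywise and $x\ne y$; (v) $\mathcal{C}$ is doubly nonnegative.
   Context: Given $c\in\mathbb{R}^n$ with $c_i\ne0$ for all $i$ and $c_{i_1}+\dots+c_{i_m}\ne0$ for all $i_1,\dots,i_m\in[n]$, the symmetric Cauchy tensor with generating vector $c$ is $\mathcal{C}=(c_{i_1\ldots i_m})$ with $c_{i_1\ldots i_m}=1/(c_{i_1}+\dots+c_{i_m})$. $\mathcal{A}x^m=\sum a_{i_1\ldots i_m}x_{i_1}\cdots x_{i_m}$; $(\mathcal{A}x^{m-1})_i=\sum_{i_2,\dots,i_m}a_{ii_2\ldots i_m}x_{i_2}\cdots x_{i_m}$; an H-eigenvalue is $\lambda\in\mathbb{R}$ with $\mathcal{A}x^{m-1}=\lambda(x_i^{m-1})_i$ for some nonzero real $x$. Completely positive: $\mathcal{A}=\sum_{k=1}^r(u^{(k)})^m$ with $u^{(k)}\in\mathbb{R}^n_+$, where $(u^m)_{i_1\ldots i_m}=u_{i_1}\cdots u_{i_m}$.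 Strictly copositive: $\mathcal{A}x^m>0$ for all $x\in\mathbb{R}^n_+\setminus\{0\}$. Doubly nonnegative: all entries and all H-eigenvalues nonnegative. *)

From Stdlib Require Import Reals.
From mathcomp Require Import all_boot.
Set Implicit Arguments. Unset Strict Implicit. Unset Printing Implicit Defensive.

Local Open Scope R_scope.

Definition vec (n : nat) := 'I_n -> R.
(* A real tensor of order m and dimension n: entries indexed by
   (i_1,...,i_m) in [n]^m, encoded as a finite function 'I_m -> 'I_n. *)
Definition tensor (m n : nat) := {ffun 'I_m -> 'I_n} -> R.


Definition idx_sum (m n : nat) (c : vec n) (idx : {ffun 'I_m -> 'I_n}) : R :=
  \big[Rplus/0]_(k < m) c (idx k).

Definition cauchy_generating (m n : nat) (c : vec n) : Prop :=
  (forall i : 'I_n, c i <> 0) /\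
  (forall idx : {ffun 'I_m -> 'I_n}, idx_sum c idx <> 0).
Arguments cauchy_generating m {n} c.

Definition cauchy_tensor (m n : nat) (c : vec n) : tensor m n :=
  fun idx => / idx_sum c idx.
Arguments cauchy_tensor m {n} c _.

Definition tpow (m n : nat) (A : tensor m n) (x : vec n) : R :=
  \big[Rplus/0]_(idx : {ffun 'I_m -> 'I_n})
     (A idx * \big[Rmult/1]_(k < m) x (idx k)).

(* (A x^{m-1})_i : sum over (i_2..i_m) of a_{i i_2 ... i_m} x_{i_2}...x_{i_m};
   the first index position is the one with val k = 0. *)
Definition tpow1 (m n : nat) (A : tensor m n) (x : vec n) (i : 'I_n) : R :=
  \big[Rplus/0]_(idx : {ffun 'I_m -> 'I_n}
                 | [forall k : 'I_m, (val k == 0%N) ==> (idx k == i)])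
     (A idx * \big[Rmult/1]_(k < m | val k != 0%N) x (idx k)).

Definition H_eigenvalue (m n : nat) (A : tensor m n) (lam : R) : Prop :=
  exists x : vec n, (exists i, x i <> 0) /\
    forall i : 'I_n, tpow1 A x i = lam * x i ^ (m - 1).

Definition rank_one (m n : nat) (u : vec n) : tensor m n :=
  fun idx => \big[Rmult/1]_(k < m) u (idx k).
Arguments rank_one m {n} u _.

Definition completely_positive (m n : nat) (A : tensor m n) : Prop :=
  exists (r : nat) (u : 'I_r -> vec n),
    (forall k i, 0 <= u k i) /\
    forall idx, A idx = \big[Rplus/0]_(k < r) rank_one m (u k) idx.

Definition nonneg_vec (n : nat) (x : vec n) : Prop := forall i, 0 <= x i.

Definition strictly_copositive (m n : nat) (A : tensor m n) : Prop :=
  forall x : vec n, nonneg_vec x -> (exists i, x i <> 0) -> 0 < tpow A x.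

Definition strictly_increasing_on_nonneg (m n : nat) (A : tensor m n) : Prop :=
  forall x y : vec n, nonneg_vec x -> nonneg_vec y ->
    (forall i, y i <= x i) -> (exists i, x i <> y i) ->
    tpow A y < tpow A x.

Definition doubly_nonnegative (m n : nat) (A : tensor m n) : Prop :=
  (forall idx, 0 <= A idx) /\ (forall lam, H_eigenvalue A lam -> 0 <= lam).

From Stdlib Require Import Reals Lra Lia.
From Coquelicot Require Import Coquelicot.
From mathcomp Require Import all_boot all_order all_algebra.
From mathcomp Require Import Rstruct zify.
Import Order.TTheory GRing.Theory Num.Theory.

Set Implicit Arguments.
Unset Strict Implicit.
Unset Printing Implicit Defensive.

(* Every other condition forces c > 0 through the diagonal entries 1/(m c_i),
   tested on unit vectors.  Conversely, for c > 0 the finitely many values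
   s = c_{i_1} + ... + c_{i_m} are positive, and 1/s is then an exact positive
   combination  sum_k w_k exp(-y_k s)  of exponentials: a Riemann sum of
   int_0^oo exp(-ts) dt whose small error is absorbed, by Lagrange
   interpolation at the points exp(-s), into the weights of the integer nodes.
   Since exp(-y (c_{i_1} + ... + c_{i_m})) is the entry of the rank-one tensor
   u^m with u_i = exp(-y c_i), the Cauchy tensor is completely positive.  A
   completely positive tensor has nonnegative entries and nonnegative
   H-eigenvalues, because sum_i x_i (A x^{m-1})_i = sum_k (u_k . x)^m; and
   positive entries make x |-> A x^m strictly increasing on the orthant. *)

Section ExpBounds.
Local Open Scope R_scope.

Lemma nonneg_of_deriv_nonneg (g g' : R -> R) x : 0 <= x -> g 0 = 0 ->
  (forall t, derivable_pt_lim g t (g' t)) -> (forall t, 0 <= t -> 0 <= g' t) ->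
  0 <= g x.
Proof.
move=> hx g0 hd hg'; have [->|nz] := Req_dec x 0; first lra.
have [t [e ht]] := MVT_cor2 g g' 0 x ltac:(lra) (fun t _ => hd t).
rewrite g0 in e; have := hg' t ltac:(lra); nra.
Qed.

Lemma exp_opp_le_taylor2 x : 0 <= x -> exp (- x) <= 1 - x + x ^ 2 / 2.
Proof.
move=> hx; suff : 0 <= 1 - x + x ^ 2 / 2 - exp (- x) by lra.
apply: (@nonneg_of_deriv_nonneg (fun t => 1 - t + t ^ 2 / 2 - exp (- t))
  (fun t => -1 + t + exp (- t)) x hx).
- by rewrite Ropp_0 exp_0; lra.
- by move=> t; apply is_derive_Reals; auto_derive; [done | field].
- by move=> t ht; have := exp_ineq1_le (- t); lra.
Qed.

Lemma exp_opp_ge_taylor3 x : 0 <= x -> 1 - x + x ^ 2 / 2 - x ^ 3 / 6 <= exp (- x).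
Proof.
move=> hx; suff : 0 <= exp (- x) - (1 - x + x ^ 2 / 2 - x ^ 3 / 6) by lra.
apply: (@nonneg_of_deriv_nonneg (fun t => exp (- t) - (1 - t + t ^ 2 / 2 - t ^ 3 / 6))
  (fun t => - exp (- t) + 1 - t + t ^ 2 / 2) x hx).
- by rewrite Ropp_0 exp_0; lra.
- by move=> t; apply is_derive_Reals; auto_derive; [done | field].
- by move=> t ht; have := exp_opp_le_taylor2 ht; lra.
Qed.

(* With [x = s h], [h (1/(1 - e^{-x}) - 1/x - 1/2)] is the error of the
   trapezoid rule with step [h] for [int_0^oo e^{-ts} dt = 1/s]. *)
Lemma inv_one_sub_exp_opp_bounds x : 0 < x <= 1 ->
  0 <= / (1 - exp (- x)) - / x - / 2 <= x / 2 /\ x / 2 <= 1 - exp (- x).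
Proof.
move=> hx; have := exp_opp_le_taylor2 (Rlt_le _ _ (proj1 hx)).
have := exp_opp_ge_taylor3 (Rlt_le _ _ (proj1 hx)).
set w := exp (- x) => hlb hub.
have hden : x / 2 <= 1 - w by nra.
have hnum0 : 0 <= (x + 2) * w + x - 2 by nra.
have hnum1 : (x + 2) * w + x - 2 <= x ^ 3 / 2 by nra.
have -> : / (1 - w) - / x - / 2 = ((x + 2) * w + x - 2) / (2 * x * (1 - w)).
  by field; lra.
split; [split|lra].
- by apply: Rdiv_le_0_compat; nra.
- apply: (Rmult_le_reg_r (2 * x * (1 - w))); first nra.
  rewrite /Rdiv Rmult_assoc Rinv_l; nra.
Qed.

Lemma exp_opp_INR_mul (i : nat) s : exp (- (INR i * s)) = exp (- s) ^ i.
Proof.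
elim: i => [|i IH]; first by rewrite /= Rmult_0_l Ropp_0 exp_0.
by rewrite S_INR /= -IH -exp_plus; f_equal; ring.
Qed.

End ExpBounds.

Section BigR.
Local Open Scope R_scope.

Lemma big_Rplus_const m (a : R) : \big[Rplus/0]_(k < m) a = INR m * a.
Proof.
elim: m => [|m IH]; first by rewrite big_ord0 /=; ring.
by rewrite S_INR big_ord_recr /= IH; ring.
Qed.

Lemma big_Rmult_const m (a : R) : \big[Rmult/1]_(k < m) a = a ^ m.
Proof.
elim: m => [|m IH]; first by rewrite big_ord0.
by rewrite big_ord_recr /= IH; ring.
Qed.

Lemma big_Rplus_ge0 (I : finType) (P : pred I) (F : I -> R) :
  (forall i, P i -> 0 <= F i) -> 0 <= \big[Rplus/0]_(i | P i) F i.
Proof. by move=> h; apply: big_ind => //; [lra | move=> x y; lra]. Qed.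

Lemma big_Rmult_ge0 (I : finType) (P : pred I) (F : I -> R) :
  (forall i, P i -> 0 <= F i) -> 0 <= \big[Rmult/1]_(i | P i) F i.
Proof. by move=> h; apply: big_ind => //; [lra | move=> x y; nra]. Qed.

Lemma big_Rplus_le (I : finType) (P : pred I) (F G : I -> R) :
  (forall i, P i -> F i <= G i) ->
  \big[Rplus/0]_(i | P i) F i <= \big[Rplus/0]_(i | P i) G i.
Proof. by move=> h; apply: (big_ind2 (fun a b => a <= b)) => //; [lra | move=> *; lra]. Qed.

Lemma big_Rmult_le (I : finType) (P : pred I) (F G : I -> R) :
  (forall i, P i -> 0 <= F i <= G i) ->
  0 <= \big[Rmult/1]_(i | P i) F i <= \big[Rmult/1]_(i | P i) G i.
Proof.
move=> h; apply: (big_ind2 (fun a b => 0 <= a <= b)) => //; first lra.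
by move=> x1 x2 y1 y2 [? ?] [? ?]; split; nra.
Qed.

Lemma big_Rplus_gt0 m (F : 'I_m -> R) : (0 < m)%N -> (forall k, 0 < F k) ->
  0 < \big[Rplus/0]_(k < m) F k.
Proof.
case: m F => [|m] F // _ hF; rewrite big_ord_recl /=.
have := @big_Rplus_ge0 _ (fun _ => true) _ (fun k _ => Rlt_le _ _ (hF (lift ord0 k))).
by set T := \big[_/_]_(k < m | _) _; have := hF ord0; lra.
Qed.

Lemma big_Rplus_geometric (q : R) n : (\big[Rplus/0]_(i < n) q ^ i) * (1 - q) = 1 - q ^ n.
Proof.
elim: n => [|n IH]; first by rewrite big_ord0 /=; ring.
by rewrite big_ord_recr /= Rmult_plus_distr_r IH; ring.
Qed.

Lemma big_Rmult_exp (I : finType) (F : I -> R) :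
  \big[Rmult/1]_(j : I) exp (F j) = exp (\big[Rplus/0]_(j : I) F j).
Proof.
apply: (big_ind2 (fun a b => a = exp b)); first by rewrite exp_0.
  by move=> x1 x2 y1 y2 -> ->; rewrite exp_plus.
done.
Qed.

Lemma pow_lt_pow_l (a b : R) m : 0 <= a < b -> (0 < m)%N -> a ^ m < b ^ m.
Proof.
move=> hab; elim: m => [|[|m] IH] // _; first by rewrite /=; lra.
have := IH isT; have := pow_le a m.+1 (proj1 hab).
by rewrite -[a ^ m.+2]/(a * a ^ m.+1) -[b ^ m.+2]/(b * b ^ m.+1); nra.
Qed.

Lemma pow_even_ge0 (a : R) k : ~~ odd k -> 0 <= a ^ k.
Proof.
move=> hk; rewrite -[k]odd_double_half (negbTE hk) add0n -mul2n pow_mult.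
by apply: pow_le; nra.
Qed.

Lemma pow_even_gt0 (a : R) k : ~~ odd k -> a <> 0 -> 0 < a ^ k.
Proof.
move=> hk ha; rewrite -[k]odd_double_half (negbTE hk) add0n -mul2n pow_mult.
by apply: pow_lt; rewrite /=; case: (Rlt_or_le a 0) => h; nra.
Qed.

End BigR.

Section Interpolation.
Local Open Scope ring_scope.

Lemma lagrange_basis (N : nat) (z : 'I_N -> R) : injective z ->
  exists ell : 'I_N -> {poly R}, (forall j, (size (ell j) <= N)%N) /\
    (forall j l, (ell j).[z l] = (j == l)%:R).
Proof.
move=> zinj; pose p j := \prod_(l | l != j) ('X - (z l)%:P).
exists (fun j => ((p j).[z j]^-1)%:P * p j); split.
  move=> j; have jN := ltn_ord j.
  apply: leq_trans (size_polyMleq _ _) _.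
  have hC := size_polyC_leq1 ((p j).[z j]^-1).
  have hp := size_poly_prod_leq (predC1 j) (fun l => 'X - (z l)%:P).
  rewrite (eq_bigr (fun _ => 2%N)) in hp; last by move=> l _; rewrite size_XsubC.
  rewrite sum_nat_const cardC1 card_ord in hp.
  by move: hC hp; rewrite /p; set A := size _; set B := size _; lia.
move=> j l; rewrite hornerM hornerC.
have [<-|neq] := altP eqP.
  rewrite mulVf // /p horner_prod; apply/prodf_neq0 => k nk.
  by rewrite hornerXsubC subr_eq0 (inj_eq zinj) eq_sym.
rewrite /p [X in _ * X]horner_prod [X in _ * X](bigD1 l) 1?eq_sym //=.
by rewrite hornerXsubC subrr mul0r mulr0.
Qed.

(* The coefficients of the interpolating polynomial depend linearly on the
   data, hence are bounded by a constant (depending on the nodes) times the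
   sup norm of the data. *)
Lemma interpolation_bounded_coef (N : nat) (z : 'I_N -> R) : injective z ->
  exists C : R, 1 <= C /\ forall E : 'I_N -> R, exists a : nat -> R,
    (forall l, \sum_(i < N) a i * z l ^+ i = E l) /\
    (forall B, (forall j, `|E j| <= B) -> forall i, (i < N)%N -> `|a i| <= C * B).
Proof.
move=> /lagrange_basis [ell [hsize hval]].
exists (1 + \sum_j \sum_(i < N) `|(ell j)`_i|); split.
  by rewrite lerDl; do 2!apply: sumr_ge0 => ? _.
move=> E; exists (fun i => \sum_j E j * (ell j)`_i); split.
  move=> l; under eq_bigr do rewrite mulr_suml.
  rewrite exchange_big /=.
  under eq_bigr do (under eq_bigr do rewrite -mulrA;
                    rewrite -mulr_sumr -horner_coef_wide // hval).
  rewrite (bigD1 l) //= eqxx mulr1 big1 ?addr0 // => j /negbTE ->.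
  by rewrite mulr0.
move=> B hB i hi.
have B0 : 0 <= B.
  case: N z E ell hsize hval hB hi => // N' _ E _ _ _ hB _.
  exact: le_trans (normr_ge0 _) (hB ord0).
apply: le_trans (ler_norm_sum _ _ _) _.
apply: le_trans (_ : \sum_j B * `|(ell j)`_i| <= _).
  by apply: ler_sum => j _; rewrite normrM ler_wpM2r.
rewrite -mulr_sumr mulrC ler_wpM2r // ler_wpDl //.
apply: ler_sum => j _; rewrite (bigD1 (Ordinal hi)) //= ler_wpDr //.
exact: sumr_ge0.
Qed.

End Interpolation.

Section ExpMixture.
Local Open Scope R_scope.

Lemma eventually_forall_fin (T : finType) (P : T -> nat -> Prop) :
  (forall j, exists L0, forall L, (L0 <= L)%N -> P j L) ->
  exists L0, forall j L, (L0 <= L)%N -> P j L.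
Proof.
move=> hP; suff [L0 hL0] : exists L0, forall j, j \in enum T -> forall L, (L0 <= L)%N -> P j L.
  by exists L0 => j; apply: hL0; rewrite mem_enum.
elim: (enum T) => [|x s [Ls IH]]; first by exists 0%N.
have [Lx hx] := hP x; exists (Lx + Ls)%N => j; rewrite inE => /orP [/eqP -> | js] L hL.
  by apply: hx; lia.
by apply: IH => //; lia.
Qed.

Lemma exists_INR_ge (T : finType) (F : T -> R) : exists p, forall j, F j <= INR p.
Proof.
suff [p hp] : exists p0, forall j p, (p0 <= p)%N -> F j <= INR p by exists p => j; apply: hp.
apply: eventually_forall_fin => j; have [n hn] := INR_unbounded (F j).
by exists n => p np; apply/Rlt_le/(Rlt_le_trans _ _ _ hn)/le_INR/ssrnat.leP.
Qed.

Lemma exp_opp_pow_eventually_le s e : 0 < s -> 0 < e ->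
  exists L0, forall L, (L0 <= L)%N -> exp (- s) ^ L <= e.
Proof.
move=> s0 e0; have z1 : Rabs (exp (- s)) < 1.
  rewrite Rabs_pos_eq; last exact/Rlt_le/exp_pos.
  by rewrite -exp_0; apply: exp_increasing; lra.
have [L0 hL0] := pow_lt_1_zero _ z1 _ e0; exists L0 => L /ssrnat.leP /hL0.
by move/(Rle_lt_trans _ _ _ (Rle_abs _)); lra.
Qed.

(* Summing [h z^i q^r] over the grid [i < L], [r < p + 1], with [q^(p+1) = z],
   is a geometric sum over [(p + 1) L] consecutive powers of [q]; the extra
   weights [c i] sit on the nodes [r = 0]. *)
Lemma grid_geometric_sum (L p : nat) (z q h : R) (c : nat -> R) :
  q ^ p.+1 = z -> 1 - q <> 0 ->
  \big[Rplus/0]_(k : 'I_L * 'I_p.+1)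
     ((h + (if val k.2 == 0%N then c (val k.1) else 0)) * (z ^ k.1 * q ^ k.2))
  = h * (1 - z ^ L) / (1 - q) + \big[Rplus/0]_(i < L) (c i * z ^ i).
Proof.
move=> hqz hq1.
rewrite -(pair_big xpredT xpredT (fun (i : 'I_L) (r : 'I_p.+1) =>
   (h + (if val r == 0%N then c (val i) else 0)) * (z ^ i * q ^ r))) /=.
set G := \big[Rplus/0]_(r < p.+1) q ^ r.
have row (i : 'I_L) : \big[Rplus/0]_(r < p.+1)
   ((h + (if val r == 0%N then c (val i) else 0)) * (z ^ i * q ^ r))
   = h * z ^ i * G + c i * z ^ i.
  rewrite [G]big_ord_recl big_ord_recl /= Rmult_plus_distr_l big_distrr /=.
  rewrite (eq_bigr (fun r : 'I_p => h * z ^ i * (q * q ^ (0 + r)))); first ring.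
  by move=> r _; ring.
rewrite (eq_bigr _ (fun i _ => row i)) big_split /=; congr (_ + _).
have hG : G * (1 - q) = 1 - z by rewrite -hqz; exact: big_Rplus_geometric.
rewrite -(big_Rplus_geometric z L) -hG.
set Z := \big[Rplus/0]_(i < L) z ^ i.
have -> : h * (Z * (G * (1 - q))) / (1 - q) = Z * (h * G) by field.
by rewrite /Z big_distrl /=; apply: eq_bigr => i _; ring.
Qed.

Lemma grid_exp_sum (L p : nat) (h s : R) (c : nat -> R) :
  INR p.+1 * h = 1 -> 0 < s * h ->
  \big[Rplus/0]_(k : 'I_L * 'I_p.+1)
     ((h + (if val k.2 == 0%N then c (val k.1) else 0))
      * exp (- ((INR k.1 + INR k.2 * h) * s)))
  = h * (1 - exp (- s) ^ L) / (1 - exp (- (s * h)))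
    + \big[Rplus/0]_(i < L) (c i * exp (- s) ^ i).
Proof.
move=> hp sh0; rewrite -(@grid_geometric_sum L p).
- apply: eq_bigr => -[i r] _ /=; congr (_ * _).
  by rewrite -!exp_opp_INR_mul -exp_plus; congr exp; ring.
- rewrite -exp_opp_INR_mul; congr exp.
  by rewrite -[s in RHS]Rmult_1_r -hp; ring.
- suff : exp (- (s * h)) < 1 by lra.
  by rewrite -exp_0; apply: exp_increasing; lra.
Qed.

(* For [h = 1/(p + 1)], [h (1 - e^{-sL}) / (1 - e^{-sh})] is the left Riemann
   sum with step [h] of [int_0^L e^{-ts} dt]; shifted by [- h/2] it
   approximates [1/s] to second order in [h]. *)
Definition riemann_defect (h : R) (L : nat) (s : R) : R :=
  / s - (h * (1 - exp (- s) ^ L) / (1 - exp (- (s * h))) - h / 2).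

Lemma riemann_defect_small s h C L : 0 < s -> 0 < h -> 1 <= C -> s * h * (4 * C) <= 1 ->
  exp (- s) ^ L <= (1 - exp (- (s * h))) / (8 * C) ->
  Rabs (riemann_defect h L s) <= h / (4 * C).
Proof.
move=> s0 h0 C1 hsh hL.
have sh : 0 < s * h <= 1 by split; [apply: Rmult_lt_0_compat | nra].
have [[A0 A1] D] := inv_one_sub_exp_opp_bounds sh.
rewrite /riemann_defect.
set q := exp (- (s * h)) in A0 A1 D hL *; set zL := exp (- s) ^ L in hL *.
have zL0 : 0 <= zL by apply: pow_le; apply: Rlt_le; apply: exp_pos.
set A := / (1 - q) - / (s * h) - / 2 in A0 A1.
set T := zL * / (1 - q).
have T0 : 0 <= T by apply: Rmult_le_pos => //; apply/Rlt_le/Rinv_0_lt_compat; nra.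
have T1 : T <= / (8 * C).
  apply: (Rmult_le_reg_r (1 - q)); first nra.
  by rewrite /T Rmult_assoc Rinv_l; [move: hL; rewrite /Rdiv; nra | nra].
have -> : / s - (h * (1 - zL) / (1 - q) - h / 2) = h * (T - A).
  by rewrite /T /A; field; repeat split; nra.
apply: Rabs_le.
have e1 : / (8 * C) = / (4 * C) / 2 by field; lra.
have e2 : s * h / 2 <= / (4 * C) / 2.
  apply: Rmult_le_compat_r; first lra.
  by apply: (Rmult_le_reg_r (4 * C)); [lra | rewrite Rinv_l; lra].
have I0 : 0 < / (4 * C) by apply: Rinv_0_lt_compat; lra.
by rewrite /Rdiv in e1 e2 A1 *; nra.
Qed.

(* The weights [h] on the grid [i + r h] produce [1/s + h/2 - riemann_defect];
   the correction [-h/2 + a i] on the integer nodes [i] removes both error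
   terms, and stays below [h] in absolute value so the weights remain
   positive. *)
Lemma inv_exp_mixture_of_correction (N L p : nat) (h : R) (sv : 'I_N -> R)
    (a : nat -> R) :
  INR p.+1 * h = 1 -> (N <= L)%N -> (forall j, 0 < sv j) ->
  (forall i, (i < N)%N -> Rabs (a i) <= h / 4) ->
  (forall l, \big[Rplus/0]_(i < N) (a i * exp (- sv l) ^ i)
             = riemann_defect h L (sv l)) ->
  exists (I : finType) (w y : I -> R), (forall k, 0 < w k) /\
    forall l, / sv l = \big[Rplus/0]_(k : I) (w k * exp (- (y k * sv l))).
Proof.
move=> hp NL sv0 ha hdefect.
have h0 : 0 < h by apply: (Rmult_lt_reg_l (INR p.+1)); [apply: lt_0_INR; lia | lra].
pose corr i := - (if i == 0%N then h / 2 else 0) + (if (i < N)%N then a i else 0).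
exists ('I_L * 'I_p.+1)%type.
exists (fun k : 'I_L * 'I_p.+1 => h + (if val k.2 == 0%N then corr (val k.1) else 0)).
exists (fun k : 'I_L * 'I_p.+1 => INR k.1 + INR k.2 * h); split.
  move=> [i r] /=; case: (val r == 0%N); last lra.
  have hai : - (h / 4) <= (if (i < N)%N then a i else 0).
    case: ltnP => iN; last lra.
    by have := ha i iN; have := Rle_abs (- a i); rewrite Rabs_Ropp; lra.
  by rewrite /corr; case: (val i == 0%N); lra.
move=> l; set s := sv l.
have L0 : (0 < L)%N by apply: leq_trans NL; apply: leq_ltn_trans (ltn_ord l).
have hcorr : \big[Rplus/0]_(i < L) (corr i * exp (- s) ^ i)
          = - (h / 2) + \big[Rplus/0]_(i < N) (a i * exp (- s) ^ i).
  rewrite (eq_bigr (fun i : 'I_L => (- (if nat_of_ord i == 0%N then h / 2 else 0)) * exp (- s) ^ i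
      + (if (i < N)%N then a i * exp (- s) ^ i else 0))); last first.
    by move=> i _; rewrite /corr; case: ltnP => _; ring.
  rewrite big_split /=; congr (_ + _).
    rewrite (bigD1 (Ordinal L0)) //= big1; first ring.
    by move=> i; rewrite -val_eqE /= => /negbTE ->; ring.
  by rewrite (big_ord_widen L (fun i : nat => a i * exp (- s) ^ i) NL) [RHS]big_mkcond.
rewrite grid_exp_sum //; last exact: Rmult_lt_0_compat (sv0 l) h0.
by rewrite hcorr hdefect /riemann_defect -/s; ring.
Qed.

Lemma inv_exp_mixture (S : seq R) : uniq S -> (forall s, s \in S -> 0 < s) ->
  exists (I : finType) (w y : I -> R), (forall k, 0 < w k) /\
    forall s, s \in S -> / s = \big[Rplus/0]_(k : I) (w k * exp (- (y k * s))).
Proof.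
move=> uS pS; pose N := size S; pose sv (j : 'I_N) := nth 0 S j.
have sv0 j : 0 < sv j by apply/pS/mem_nth.
have zinj : injective (fun j : 'I_N => exp (- sv j)).
  move=> j k /exp_inv/Ropp_eq_compat; rewrite !Ropp_involutive => e.
  by apply/ord_inj/eqP; rewrite -(nth_uniq 0 (ltn_ord j) (ltn_ord k) uS); apply/eqP.
have [C [C1r hinterp]] := interpolation_bounded_coef zinj.
have C1 : 1 <= C by apply/RleP.
have [p hp] := exists_INR_ge (fun j => sv j * (4 * C)).
pose h := / INR p.+1.
have Ip : 0 < INR p.+1 by apply: lt_0_INR; lia.
have hp1 : INR p.+1 * h = 1 by rewrite /h; field; lra.
have h0 : 0 < h by apply: Rinv_0_lt_compat.
have [L0 hL0] : exists L0, forall j L, (L0 <= L)%N ->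
    exp (- sv j) ^ L <= (1 - exp (- (sv j * h))) / (8 * C).
  apply: eventually_forall_fin => j; apply: exp_opp_pow_eventually_le => //.
  apply: Rdiv_lt_0_compat; last lra.
  suff : exp (- (sv j * h)) < exp 0 by rewrite exp_0; lra.
  by apply: exp_increasing; have := sv0 j; nra.
pose L := (L0 + N)%N.
have [a [ha hb]] := hinterp (fun j => riemann_defect h L (sv j)).
have hdefect j : Rabs (riemann_defect h L (sv j)) <= h / (4 * C).
  apply: riemann_defect_small; [exact: sv0 | exact: h0 | exact: C1 | |].
    rewrite (_ : sv j * h * (4 * C) = sv j * (4 * C) * h); last ring.
    apply: (Rmult_le_reg_r (INR p.+1)) => //.
    by rewrite Rmult_assoc (Rmult_comm h) hp1; have := hp j; have := S_INR p; lra.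
  by apply: hL0; rewrite leq_addr.
have hab i : (i < N)%N -> Rabs (a i) <= h / 4.
  move=> iN; have /RleP hle := hb _ (fun j => introT RleP (hdefect j)) i iN.
  have -> : h / 4 = C * (h / (4 * C)) by field; lra.
  exact: hle.
have hcorr l : \big[Rplus/0]_(i < N) (a i * exp (- sv l) ^ i)
               = riemann_defect h L (sv l).
  by rewrite -(ha l); apply: eq_bigr => i _; rewrite RpowE.
have [I [w [y [w0 hrep]]]] :=
  inv_exp_mixture_of_correction hp1 (leq_addl _ _) sv0 hab hcorr.
exists I, w, y; split => // s sS.
have lS : (index s S < N)%N by rewrite index_mem.
by have := hrep (Ordinal lS); rewrite /sv /= nth_index.
Qed.

End ExpMixture.

Section Tensors.
Local Open Scope R_scope.
Variables m n : nat.

Definition const_idx (i : 'I_n) : {ffun 'I_m -> 'I_n} := [ffun _ => i].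

Definition unit_vec (i : 'I_n) : vec n := fun j => if j == i then 1 else 0.

Lemma idx_sum_const_idx (c : vec n) i : idx_sum c (const_idx i) = INR m * c i.
Proof. by rewrite /idx_sum -big_Rplus_const; apply: eq_bigr => k _; rewrite ffunE. Qed.

Lemma prod_unit_vec i (idx : {ffun 'I_m -> 'I_n}) :
  \big[Rmult/1]_(k < m) unit_vec i (idx k) = if idx == const_idx i then 1 else 0.
Proof.
case: eqP => [->|ne]; first by rewrite big1 // => k _; rewrite /unit_vec ffunE eqxx.
case: (pickP (fun k => idx k != i)) => [k hk | hall].
  by rewrite (bigD1 k) //= /unit_vec (negbTE hk); ring.
by case: ne; apply/ffunP => k; rewrite ffunE; apply/eqP/negbFE/hall.
Qed.

Lemma tpow_unit_vec (A : tensor m n) i : tpow A (unit_vec i) = A (const_idx i).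
Proof.
rewrite /tpow (bigD1 (const_idx i)) //= prod_unit_vec eqxx big1; first ring.
by move=> idx /negbTE hi; rewrite prod_unit_vec hi; ring.
Qed.

Lemma unit_vec_nonneg i : nonneg_vec (unit_vec i).
Proof. by move=> j; rewrite /unit_vec; case: eqP => _; lra. Qed.

Lemma unit_vec_neq0 i : exists j, unit_vec i j <> 0.
Proof. by exists i; rewrite /unit_vec eqxx; lra. Qed.

Hypothesis m_gt0 : (0 < m)%N.

Lemma tpow0 (A : tensor m n) : tpow A (fun _ => 0) = 0.
Proof.
by rewrite /tpow big1 // => idx _; rewrite (bigD1 (Ordinal m_gt0)) //=; ring.
Qed.

Lemma strictly_copositive_diag_gt0 (A : tensor m n) i :
  strictly_copositive A -> 0 < A (const_idx i).
Proof. by move=> hA; rewrite -tpow_unit_vec; apply: hA; [exact: unit_vec_nonneg | exact: unit_vec_neq0]. Qed.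

Lemma strictly_copositive_of_increasing (A : tensor m n) :
  strictly_increasing_on_nonneg A -> strictly_copositive A.
Proof.
move=> hA x hx [i hi]; rewrite -(tpow0 A).
by apply: hA; [exact: hx | move=> j; lra | exact: hx | exists i].
Qed.

(* The diagonal term [A (const_idx i0) x_{i0}^m] increases strictly, all
   other terms weakly. *)
Lemma strictly_increasing_of_gt0 (A : tensor m n) :
  (forall idx, 0 < A idx) -> strictly_increasing_on_nonneg A.
Proof.
move=> A0 x y hx hy hyx [i0 hi0].
rewrite /tpow (bigD1 (const_idx i0)) //= [X in _ < X](bigD1 (const_idx i0)) //=.
apply: Rplus_lt_le_compat.
  apply: Rmult_lt_compat_l; first exact: A0.
  rewrite (eq_bigr (fun _ => y i0)); last by move=> k _; rewrite ffunE.
  rewrite [X in _ < X](eq_bigr (fun _ => x i0)); last by move=> k _; rewrite ffunE.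
  rewrite !big_Rmult_const; apply: pow_lt_pow_l m_gt0.
  by have := hy i0; have := hyx i0; lra.
apply: big_Rplus_le => idx _; apply: Rmult_le_compat_l; first exact/Rlt_le/A0.
exact: (proj2 (@big_Rmult_le _ (fun _ => true) (fun k => y (idx k)) (fun k => x (idx k))
  (fun k _ => conj (hy (idx k)) (hyx (idx k))))).
Qed.

End Tensors.
Arguments const_idx m {n} i.

Section CompletelyPositive.
Local Open Scope R_scope.

Lemma completely_positive_ge0 m n (A : tensor m n) :
  completely_positive A -> forall idx, 0 <= A idx.
Proof.
move=> [r [u [u0 hA]]] idx; rewrite hA.
by apply: big_Rplus_ge0 => k _; apply: big_Rmult_ge0 => j _; exact: u0.
Qed.

(* Expanding [prod_j (sum_l u_l x_l)] over all index tuples, with the first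
   factor replaced by the coordinate [u_i]. *)
Lemma tpow1_sum_rank_one m n (A : tensor m.+1 n) r (u : 'I_r -> vec n) (x : vec n) i :
  (forall idx, A idx = \big[Rplus/0]_(k < r) rank_one m.+1 (u k) idx) ->
  tpow1 A x i
  = \big[Rplus/0]_(k < r) (u k i * (\big[Rplus/0]_(l < n) (u k l * x l)) ^ m).
Proof.
move=> hA; rewrite /tpow1 big_mkcond /=.
pose H (k : 'I_r) (j : 'I_m.+1) (l : 'I_n) :=
  if val j == 0%N then (if l == i then u k l else 0) else u k l * x l.
have term (idx : {ffun 'I_m.+1 -> 'I_n}) :
   (if [forall k, (val k == 0%N) ==> (idx k == i)]
    then A idx * \big[Rmult/1]_(k < m.+1 | val k != 0%N) x (idx k) else 0)
   = \big[Rplus/0]_(k < r) \big[Rmult/1]_(j < m.+1) H k j (idx j).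
  have -> : [forall k, (val k == 0%N) ==> (idx k == i)] = (idx ord0 == i).
    apply/forallP/idP => [/(_ ord0) //|h0 k]; apply/implyP => /eqP k0.
    by rewrite (_ : k = ord0) //; apply: ord_inj.
  rewrite big_mkcond big_ord_recl /= Rmult_1_l hA /rank_one.
  case: eqP => [e|ne].
    rewrite big_distrl /=; apply: eq_bigr => k _.
    by rewrite !big_ord_recl /H /= e eqxx big_split /=; ring.
  by rewrite big1 // => k _; rewrite big_ord_recl /H /= (introF eqP ne) Rmult_0_l.
rewrite (eq_bigr _ (fun idx _ => term idx)) exchange_big /=.
apply: eq_bigr => k _; rewrite -(bigA_distr_bigA (H k)) /= big_ord_recl.
congr (_ * _).
  by rewrite /H /= (bigD1 i) //= eqxx big1 ?Rplus_0_r // => l /negbTE ->.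
by rewrite -big_Rmult_const; apply: eq_bigr => j _; apply: eq_bigr => l _.
Qed.

Lemma H_eigenvalue_ge0_of_completely_positive m n (A : tensor m n) lam :
  (0 < m)%N -> completely_positive A -> H_eigenvalue A lam -> 0 <= lam.
Proof.
case: m A => // m A _ [r [u [u0 hA]]] [x [[i0 xi0] heig]].
have e i := tpow1_sum_rank_one x i hA.
rewrite subn1 /= in heig.
pose d k := \big[Rplus/0]_(l < n) (u k l * x l).
have [mo|me] := boolP (odd m); last first.
  (* order [m.+1] with [m] even: [(A x^m)_i0 >= 0] and [x_i0^m > 0] *)
  have : 0 <= tpow1 A x i0.
    by rewrite e; apply: big_Rplus_ge0 => k _; apply: Rmult_le_pos; [exact: u0 | exact: pow_even_ge0].
  rewrite heig; have := pow_even_gt0 me xi0; nra.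
(* [m] odd: pair the eigenvector equation with [x] *)
have ev : ~~ odd m.+1 by rewrite /= mo.
have dot : \big[Rplus/0]_(i < n) (x i * tpow1 A x i) = \big[Rplus/0]_(k < r) (d k ^ m.+1).
  rewrite (eq_bigr (fun i => \big[Rplus/0]_(k < r) (x i * u k i * d k ^ m))); last first.
    by move=> i _; rewrite e big_distrr /=; apply: eq_bigr => k _; rewrite Rmult_assoc.
  rewrite exchange_big /=; apply: eq_bigr => k _.
  rewrite (eq_bigr (fun i => (u k i * x i) * d k ^ m)); last by move=> i _; ring.
  by rewrite -big_distrl.
have : 0 <= lam * \big[Rplus/0]_(i < n) (x i ^ m.+1).
  rewrite (_ : _ * _ = \big[Rplus/0]_(k < r) (d k ^ m.+1)).
    by apply: big_Rplus_ge0 => k _; exact: pow_even_ge0 _ ev.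
  by rewrite -dot big_distrr; apply: eq_bigr => i _; rewrite heig /=; ring.
have : 0 < \big[Rplus/0]_(i < n) (x i ^ m.+1).
  rewrite (bigD1 i0) //=; apply: Rplus_lt_le_0_compat; first exact: pow_even_gt0 ev xi0.
  by apply: big_Rplus_ge0 => i _; exact: pow_even_ge0 _ ev.
nra.
Qed.

Lemma doubly_nonnegative_of_completely_positive m n (A : tensor m n) :
  (0 < m)%N -> completely_positive A -> doubly_nonnegative A.
Proof.
move=> m0 hA; split; first exact: completely_positive_ge0.
by move=> lam; apply: H_eigenvalue_ge0_of_completely_positive.
Qed.

Lemma rank_one_exp m n (c : vec n) (a b : R) (idx : {ffun 'I_m -> 'I_n}) : (0 < m)%N ->
  rank_one m (fun l => exp (a / INR m - b * c l)) idx = exp a * exp (- (b * idx_sum c idx)).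
Proof.
move=> m0; rewrite /rank_one big_Rmult_exp -exp_plus; congr exp.
rewrite (eq_bigr (fun j => a / INR m + (- b) * c (idx j))); last by move=> j _; ring.
have Im : 0 < INR m by apply: lt_0_INR; apply/ssrnat.ltP.
rewrite big_split /= big_Rplus_const -big_distrr /= /idx_sum.
by set T := \big[_/_]_(i < m) _; field; lra.
Qed.

End CompletelyPositive.

Section Cauchy.
Local Open Scope R_scope.
Variables (m n : nat) (c : vec n).
Hypothesis m_gt0 : (0 < m)%N.

Lemma cauchy_tensor_diag_ge0 i : c i <> 0 ->
  0 <= cauchy_tensor m c (const_idx m i) -> 0 < c i.
Proof.
rewrite /cauchy_tensor idx_sum_const_idx => ci0 hdiag.
have Im : 0 < INR m by apply: lt_0_INR; apply/ssrnat.ltP.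
have mci0 : INR m * c i <> 0 by apply: Rmult_integral_contrapositive; split; lra.
have inv0 : 0 < / (INR m * c i) by have := Rinv_neq_0_compat _ mci0; lra.
by have := Rinv_0_lt_compat _ inv0; rewrite Rinv_inv; nra.
Qed.

Hypothesis c_gt0 : forall i, 0 < c i.

Lemma cauchy_tensor_gt0 idx : 0 < cauchy_tensor m c idx.
Proof. by apply/Rinv_0_lt_compat/big_Rplus_gt0. Qed.

Lemma cauchy_completely_positive : completely_positive (cauchy_tensor m c).
Proof.
pose S := undup [seq idx_sum c idx | idx <- enum {ffun 'I_m -> 'I_n}].
have memS (idx : {ffun 'I_m -> 'I_n}) : idx_sum c idx \in S.
  by rewrite mem_undup; apply/mapP; exists idx; rewrite ?mem_enum.
have S0 s : s \in S -> 0 < s.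
  by rewrite mem_undup => /mapP [idx _ ->]; apply: big_Rplus_gt0.
have [I [w [y [w0 hS]]]] := inv_exp_mixture (undup_uniq _) S0.
exists #|I|, (fun k l => exp (ln (w (enum_val k)) / INR m - y (enum_val k) * c l)).
split=> [k l|idx]; first exact/Rlt_le/exp_pos.
rewrite /cauchy_tensor (hS _ (memS idx)).
transitivity (\big[Rplus/0]_(k in I) (w k * exp (- (y k * idx_sum c idx)))).
  by apply: eq_bigl => k; rewrite inE.
by rewrite big_enum_val; apply: eq_bigr => k _; rewrite rank_one_exp // exp_ln.
Qed.

End Cauchy.

Theorem mainTheorem17 (m n : nat) (c : 'I_n -> R)
  (hm : (2 <= m)%N) (hc : cauchy_generating m c) :
  [<-> completely_positive (cauchy_tensor m c);
       strictly_copositive (cauchy_tensor m c);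
       (forall i : 'I_n, Rlt 0 (c i));
       strictly_increasing_on_nonneg (cauchy_tensor m c);
       doubly_nonnegative (cauchy_tensor m c)].
Proof.
have m0 : (0 < m)%N := ltnW hm.
have diag i : 0 <= cauchy_tensor m c (const_idx m i) -> 0 < c i.
  by have := cauchy_tensor_diag_ge0 m0 (proj1 hc i).
have sc_pos : strictly_copositive (cauchy_tensor m c) -> forall i, 0 < c i.
  by move=> hsc i; apply/diag/Rlt_le; exact: strictly_copositive_diag_gt0.
have pos_inc : (forall i, 0 < c i) -> strictly_increasing_on_nonneg (cauchy_tensor m c).
  by move=> c0; apply: (strictly_increasing_of_gt0 m0) => idx; apply: cauchy_tensor_gt0.
have sc_of_inc := strictly_copositive_of_increasing m0 (A := cauchy_tensor m c).
have cp_of_pos := @cauchy_completely_positive m n c m0.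
tfae.
- by move=> /completely_positive_ge0 C0; apply/sc_of_inc/pos_inc => i; apply: diag.
- exact: sc_pos.
- exact: pos_inc.
- by move=> /sc_of_inc /sc_pos /cp_of_pos; apply: doubly_nonnegative_of_completely_positive.
- by move=> [C0 _]; apply: cp_of_pos => i; apply: diag.
Qed.
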